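(* Let $M$ be a loopless matroid of rank $r$ on ground set $S$, and let $S=S_1\cup\dots\cup S_r$ be a partition of $S$ into $r$ color classes. The following are equivalent: (i) $S_i$ is a cut of the restriction $M|(S_1\cup\dots\cup S_i)$ for $i=1,\dots,r$; (ii) the coloring is rainbow circuit-free and $r_M(S_1\cup\dots\cup S_i)=i$ for $i=1,\dots,r$; (iii) each $S_i$ is non-empty and $S_1\cup\dots\cup S_i$ is closed in $M$ for $i=1,\dots,r$.
   Context: A cut of a matroid is an inclusionwise minimal subset of the ground set intersecting every basis. A coloring is rainbow circuit-free if no circuit of $M$ has all its elements of pairwise different colors. A set $X\subseteq S$ is closed (a flat) if $r_M(X+e)>r_M(X)$ for every $e\in S-X$. *)

From mathcomp Require Import all_boot.
Set Implicit Arguments. Unset Strict Implicit. Unset Printing Implicit Defensive.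

Record matroid (T : finType) := Matroid {
  indep : {set T} -> bool;
  indep0 : indep set0;
  indep_sub : forall A B : {set T}, B \subset A -> indep A -> indep B;
  indep_aug : forall A B : {set T}, indep A -> indep B -> #|A| < #|B| ->
     exists2 x, x \in B :\: A & indep (x |: A)
}.

Section Defs.
Variables (T : finType) (M : matroid T).

Definition rank (X : {set T}) : nat :=
  \max_(I : {set T} | indep M I && (I \subset X)) #|I|.

Definition loopless : Prop := forall x : T, indep M [set x].

Definition basis_of (X B : {set T}) : bool :=
  [&& indep M B, B \subset X & #|B| == rank X].

(* C is a cut of M|X: inclusionwise minimal subset of X meeting every basis of M|X *)
Definition cut_of (X C : {set T}) : bool :=
  minset (fun D : {set T} => (D \subset X) &&
            [forall B : {set T}, basis_of X B ==> (D :&: B != set0)]) C.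

Definition circuit (C : {set T}) : bool := minset (fun D => ~~ indep M D) C.

Definition is_flat (X : {set T}) : Prop :=
  forall e, e \notin X -> rank X < rank (e |: X).

Definition rainbow_circuit_free (col : T -> nat) : Prop :=
  forall C : {set T}, circuit C -> ~ {in C &, injective col}.

End Defs.

Definition cclass (T : finType) (col : T -> nat) (i : nat) : {set T} :=
  [set x | col x == i].
Definition cprefix (T : finType) (col : T -> nat) (i : nat) : {set T} :=
  [set x | col x <= i].

From mathcomp Require Import all_boot zify.
Set Implicit Arguments. Unset Strict Implicit. Unset Printing Implicit Defensive.

(* Write P_i = S_1 u ... u S_i.  All three conditions amount to saying that
   rank (P_i) = i for every i and that every element of S_i lies outside the
   span of P_(i-1).  For (i) this is because the cuts of M|Y are exactly the
   complements in Y of the hyperplanes of M|Y.  For (ii): a rainbow circuit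
   would have its top-coloured element spanned by its lower-coloured
   elements; conversely rainbow bases of the P_i can be grown one colour at a
   time, and adding an element of a new colour to one gives a rainbow, hence
   independent, set.  For (iii): the ranks of the flats P_0, ..., P_r
   increase strictly from 0 to r, hence by exactly one at each step. *)

Lemma inj_setU1 (aT : finType) (rT : eqType) (f : aT -> rT) (A : {set aT}) x :
  {in A &, injective f} -> {in A, forall y, f y != f x} ->
  {in x |: A &, injective f}.
Proof.
move=> injA neq a b; rewrite !in_setU1.
case/predU1P=> [->|aA] /predU1P[->|bA] //.
- by move/esym/eqP; rewrite (negbTE (neq b bA)).
- by move/eqP; rewrite (negbTE (neq a aA)).
- exact: injA.
Qed.

Lemma strictly_increasing_id (f : nat -> nat) n :
  f 0 = 0 -> f n = n -> (forall i, i < n -> f i < f i.+1) ->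
  forall i, i <= n -> f i = i.
Proof.
move=> f0 fn incr.
have gap k i : i + k <= n -> f i + k <= f (i + k).
  elim: k => [|k IH] le; first by rewrite !addn0.
  rewrite addnS in le *; have := incr _ le; have := IH (ltnW le); lia.
move=> i le; have := gap i 0; have := gap (n - i) i.
rewrite add0n f0 subnKC // fn; lia.
Qed.

Section Rank.
Variables (T : finType) (M : matroid T).
Implicit Types (X Y C B I : {set T}) (e : T).

Lemma indep_card_le_rank I X : indep M I -> I \subset X -> #|I| <= rank M X.
Proof.
move=> iI sIX; rewrite /rank.
by apply: (leq_bigmax_cond (F := fun J : {set T} => #|J|)); rewrite iI sIX.
Qed.

Lemma basis_exists X : exists B, basis_of M X B.
Proof.
have [|B] := @eq_bigmax_cond _ [pred J : {set T} | indep M J && (J \subset X)]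
  (fun J => #|J|).
  by apply/card_gt0P; exists set0; rewrite inE indep0 sub0set.
rewrite inE => /andP[iB sBX] cB.
by exists B; rewrite /basis_of iB sBX -cB; apply/eqP.
Qed.

Lemma rank_set0 : rank M set0 = 0.
Proof.
have [B /and3P[_ sB /eqP <-]] := basis_exists set0.
by apply/eqP; rewrite cards_eq0 -subset0.
Qed.

Lemma rank_mono X Y : X \subset Y -> rank M X <= rank M Y.
Proof.
move=> sXY; have [B /and3P[iB sBX /eqP <-]] := basis_exists X.
exact: indep_card_le_rank iB (subset_trans sBX sXY).
Qed.

Lemma rank_setU1 X e : rank M (e |: X) <= (rank M X).+1.
Proof.
have [B /and3P[iB sB /eqP <-]] := basis_exists (e |: X).
have sBX : B :\ e \subset X by rewrite subDset.
have := indep_card_le_rank (indep_sub (subsetDl B [set e]) iB) sBX.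
by rewrite (cardsD1 e B); case: (e \in B) => /=; lia.
Qed.

Lemma indep_extend_basis I X : indep M I -> I \subset X ->
  exists2 B : {set T}, I \subset B & basis_of M X B.
Proof.
move=> iI sIX.
have [B /maxsetP[/andP[iB sBX] maxB] sIB] :=
  @maxset_exists _ (fun J => indep M J && (J \subset X)) I
    (introT andP (conj iI sIX)).
exists B => //; rewrite /basis_of iB sBX eqn_leq indep_card_le_rank //=.
rewrite leqNgt; apply/negP => ltB.
have [W /and3P[iW sWX /eqP cW]] := basis_exists X.
rewrite -cW in ltB; have [x /setDP[xW xB] ixB] := indep_aug iB iW ltB.
have eqB : x |: B = B.
  by apply: maxB; rewrite ?subsetUr //= ixB subUset sub1set (subsetP sWX) ?sBX.
by move: xB; rewrite -eqB setU11.
Qed.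

Lemma basis_setU1_indep X B e : basis_of M X B ->
  rank M X < rank M (e |: X) -> indep M (e |: B).
Proof.
case/and3P=> iB sBX /eqP cB ltX.
have [W /and3P[iW sW /eqP cW]] := basis_exists (e |: X).
rewrite -cB -cW in ltX; have [x /setDP[xW xB] ixB] := indep_aug iB iW ltX.
have [<- //|nex] := eqVneq x e.
have xX : x \in X by move: (subsetP sW x xW); rewrite in_setU1 (negbTE nex).
have sxBX : x |: B \subset X by rewrite subUset sub1set xX.
by have := indep_card_le_rank ixB sxBX; rewrite cardsU1 xB cB ltnn.
Qed.

Lemma rank_jump_subset X Y e : X \subset Y ->
  rank M Y < rank M (e |: Y) -> rank M X < rank M (e |: X).
Proof.
move=> sXY ltY.
have eY : e \notin Y.
  by apply: contraTN ltY => eY; rewrite (setUidPr _) ?sub1set // ltnn.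
have [B bB] := basis_exists X; have /and3P[iB sBX /eqP cB] := bB.
have [B' sBB' bB'] := indep_extend_basis iB (subset_trans sBX sXY).
have ieB : indep M (e |: B).
  exact: indep_sub (setUS _ sBB') (basis_setU1_indep bB' ltY).
have eB : e \notin B by apply: contra eY => /(subsetP sBX) /(subsetP sXY).
by have := indep_card_le_rank ieB (setUS _ sBX); rewrite cardsU1 eB cB.
Qed.


Lemma cut_rank_lt Y C : cut_of M Y C -> rank M (Y :\: C) < rank M Y.
Proof.
case/minsetP=> /andP[_ /forallP meetC] _.
have [B0 bB0] := basis_exists (Y :\: C).
have /and3P[iB0 sB0 /eqP cB0] := bB0.
have [B1 sB01 bB1] := indep_extend_basis iB0 (subset_trans sB0 (subsetDl _ _)).
have /set0Pn[x /setIP[xC xB1]] := implyP (meetC B1) bB1.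
have xB0 : x \notin B0 by apply: contraTN xC => /(subsetP sB0) /setDP[].
have /subset_leq_card : x |: B0 \subset B1 by rewrite subUset sub1set xB1.
by case/and3P: bB1 => _ _ /eqP <-; rewrite cardsU1 xB0 cB0.
Qed.

Lemma cut_rank_setU1 Y C e : cut_of M Y C -> e \in C ->
  rank M Y <= rank M (e |: (Y :\: C)).
Proof.
case/minsetP=> /andP[sCY _] minC eC.
have sCeY : C :\ e \subset Y := subset_trans (subsetDl _ _) sCY.
have /forallPn[B] :
    ~~ [forall B, basis_of M Y B ==> ((C :\ e) :&: B != set0)].
  apply/negP => meetCe.
  have /setP/(_ e) := minC _ (introT andP (conj sCeY meetCe)) (subsetDl _ _).
  by rewrite setD11 eC.
rewrite negb_imply negbK => /andP[/and3P[iB sBY /eqP <-] /eqP CeB0].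
apply: indep_card_le_rank iB _; apply/subsetP => x xB.
have : x \notin (C :\ e) :&: B by rewrite CeB0 inE.
by rewrite !inE xB (subsetP sBY x xB) !andbT negb_and negbK.
Qed.

Lemma hyperplane_complement_cut Y C : C \subset Y ->
  rank M Y = (rank M (Y :\: C)).+1 ->
  {in C, forall e, rank M (Y :\: C) < rank M (e |: (Y :\: C))} ->
  cut_of M Y C.
Proof.
move=> sCY eqY jumpC; apply/minsetP; split.
  rewrite sCY /=; apply/forallP => B; apply/implyP => /and3P[iB sBY /eqP cB].
  apply/negP => /eqP CB0.
  have sBX : B \subset Y :\: C.
    by rewrite subsetD sBY disjoint_sym -setI_eq0 CB0 eqxx.
  by have := indep_card_le_rank iB sBX; rewrite cB eqY ltnn.
move=> D /andP[_ /forallP meetD] sDC; apply/eqP; rewrite eqEsubset sDC /=.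
apply/subsetP => e eC.
have [B0 bB0] := basis_exists (Y :\: C); have /and3P[_ sB0 /eqP cB0] := bB0.
have eB0 : e \notin B0 by apply: contraTN eC => /(subsetP sB0) /setDP[].
have beB0 : basis_of M Y (e |: B0).
  rewrite /basis_of (basis_setU1_indep bB0 (jumpC e eC)) cardsU1 eB0 cB0 eqY.
  by rewrite eqxx subUset sub1set (subsetP sCY) // (subset_trans sB0) ?subsetDl.
have /set0Pn[x /setIP[xD]] := implyP (meetD _) beB0.
case/setU1P=> [<- // | xB0].
by have := subsetP sB0 x xB0; rewrite !inE (subsetP sDC x xD).
Qed.

Lemma cut_ofP Y C : C \subset Y ->
  cut_of M Y C <->
  rank M Y = (rank M (Y :\: C)).+1 /\
  {in C, forall e, rank M (Y :\: C) < rank M (e |: (Y :\: C))}.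
Proof.
move=> sCY; split=> [cutC | [eqY jumpC]]; last exact: hyperplane_complement_cut.
have ltXY := cut_rank_lt cutC.
have [e eC] : exists e, e \in C.
  by apply/set0Pn; apply: contraTneq ltXY => ->; rewrite setD0 ltnn.
have eqY : rank M Y = (rank M (Y :\: C)).+1.
  by have := cut_rank_setU1 cutC eC; have := rank_setU1 (Y :\: C) e; lia.
by split=> // e' e'C; have := cut_rank_setU1 cutC e'C; lia.
Qed.

Lemma circuit_exists A : ~~ indep M A -> exists2 C, circuit M C & C \subset A.
Proof. by case/(minset_exists (P := fun D => ~~ indep M D))=> C; exists C. Qed.

End Rank.

Section Rainbow.
Variables (T : finType) (M : matroid T) (col : T -> nat).

Lemma rainbow_indep (A : {set T}) :
  rainbow_circuit_free M col -> {in A &, injective col} -> indep M A.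
Proof.
move=> rcf injA; apply: contraT => depA.
have [C circC sCA] := circuit_exists depA.
by case: (rcf C circC (sub_in2 (subsetP sCA) injA)).
Qed.

Definition unspanned_by_lower : Prop :=
  forall e, rank M (cprefix col (col e).-1) <
            rank M (e |: cprefix col (col e).-1).

Lemma unspanned_rainbow_circuit_free :
  unspanned_by_lower -> rainbow_circuit_free M col.
Proof.
move=> unsp C /minsetP[depC minC] injC.
have [e0 e0C] : exists e0, e0 \in C.
  by apply/set0Pn; apply: contraNneq depC => ->; rewrite indep0.
have [e eC emax] := arg_maxnP col e0C.
have sCe : C :\ e \subset cprefix col (col e).-1.
  apply/subsetP => x /setD1P[xe xC]; rewrite inE.
  have : col x != col e by apply: contra xe => /eqP/(injC x e xC eC)->.
  have := emax x xC; lia.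
have iCe : indep M (C :\ e).
  apply: contraT => depCe; have /setP/(_ e) := minC _ depCe (subsetDl _ _).
  by rewrite setD11 (eC : e \in C).
have [B sCeB bB] := indep_extend_basis iCe sCe.
move/negP: depC; apply; apply: indep_sub (basis_setU1_indep bB (unsp e)).
by rewrite -(setD1K eC) setUS.
Qed.

End Rainbow.

Section ColourPrefixes.
Variables (T : finType) (col : T -> nat).
Local Notation P := (cprefix col).
Local Notation S := (cclass col).

Lemma in_cprefix x i : (x \in P i) = (col x <= i).
Proof. by rewrite inE. Qed.

Lemma in_cclass x i : (x \in S i) = (col x == i).
Proof. by rewrite inE. Qed.

Lemma cprefixS i j : i <= j -> P i \subset P j.
Proof.
by move=> le; apply/subsetP => x; rewrite !in_cprefix => /leq_trans; apply.
Qed.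

Lemma cprefixDcclass i : 0 < i -> P i :\: S i = P i.-1.
Proof. by move=> i0; apply/setP => x; rewrite !inE; lia. Qed.

Lemma cut_of_cprefixP (M : matroid T) i : 0 < i ->
  cut_of M (P i) (S i) <->
  rank M (P i) = (rank M (P i.-1)).+1 /\
  {in S i, forall e, rank M (P i.-1) < rank M (e |: P i.-1)}.
Proof.
move=> i0; rewrite -cprefixDcclass //; apply: cut_ofP.
by apply/subsetP => x; rewrite in_cclass in_cprefix => /eqP->.
Qed.

End ColourPrefixes.

Section Layered.
Variables (T : finType) (M : matroid T) (r : nat) (col : T -> nat).
Hypothesis col_range : forall x, 1 <= col x <= r.
Local Notation P := (cprefix col).
Local Notation S := (cclass col).

Definition layered : Prop :=
  (forall i, i <= r -> rank M (P i) = i) /\ unspanned_by_lower M col.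

Lemma cprefix0 : P 0 = set0.
Proof. by apply/setP => x; rewrite !inE; have := col_range x; lia. Qed.

Lemma cprefix_top : P r = setT.
Proof. by apply/setP => x; rewrite !inE; have := col_range x; lia. Qed.

Lemma rank_cprefix0 : rank M (P 0) = 0.
Proof. by rewrite cprefix0 rank_set0. Qed.

Lemma cut_layered :
  (forall i, 1 <= i <= r -> cut_of M (P i) (S i)) -> layered.
Proof.
move=> cuts; split.
  elim=> [|i IH] lei; first exact: rank_cprefix0.
  have [-> _] := (cut_of_cprefixP col M (ltn0Sn i)).1 (cuts i.+1 lei).
  by rewrite IH // ltnW.
move=> e; have /andP[e1 _] := col_range e.
have [_ jump] := (cut_of_cprefixP col M e1).1 (cuts _ (col_range e)).
by apply: jump; rewrite in_cclass.
Qed.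

Lemma layered_cut : layered -> forall i, 1 <= i <= r -> cut_of M (P i) (S i).
Proof.
move=> [rankP unsp] i /andP[i1 ir]; apply/cut_of_cprefixP => //; split.
  by have := rankP i ir; have := rankP i.-1 (leq_trans (leq_pred i) ir); lia.
by move=> e; rewrite in_cclass => /eqP <-; apply: unsp.
Qed.

Lemma layered_flat :
  layered -> forall i, 1 <= i <= r -> S i != set0 /\ is_flat M (P i).
Proof.
move=> [rankP unsp] i /andP[i1 ir]; split.
  apply/negP => /eqP S0.
  have := rankP i ir; have := rankP _ (leq_trans (leq_pred i) ir).
  by rewrite -cprefixDcclass // S0 setD0; lia.
move=> e; rewrite in_cprefix -ltnNge => ie.
by apply: rank_jump_subset (unsp e); apply: cprefixS; lia.
Qed.

Lemma flat_layered : loopless M -> rank M setT = r ->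
  (forall i, 1 <= i <= r -> S i != set0 /\ is_flat M (P i)) -> layered.
Proof.
move=> loopM rankT flats.
have unsp : unspanned_by_lower M col.
  move=> e; have [le1|gt1] := leqP (col e) 1.
    have -> : (col e).-1 = 0 by have := col_range e; lia.
    rewrite cprefix0 setU0 rank_set0.
    by have := indep_card_le_rank (loopM e) (subxx _); rewrite cards1.
  have /andP[_ ler] := col_range e.
  apply: (flats (col e).-1 _).2; first lia.
  by rewrite in_cprefix; lia.
split=> //; apply: (strictly_increasing_id (f := fun i => rank M (P i))).
- exact: rank_cprefix0.
- by rewrite cprefix_top.
- move=> i ltir; have [/set0Pn[e]] := flats i.+1 ltir.
  rewrite in_cclass => /eqP ce _; have := unsp e; rewrite ce => lt.
  apply: (leq_trans lt); apply: rank_mono.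
  by rewrite subUset sub1set in_cprefix ce leqnn cprefixS.
Qed.

Lemma rainbow_basis_cprefix : (forall i, i <= r -> rank M (P i) = i) ->
  forall j, j <= r -> exists2 B, basis_of M (P j) B & {in B &, injective col}.
Proof.
move=> rankP; elim=> [|j IH] lej.
  exists set0; last by move=> ? ?; rewrite inE.
  by rewrite /basis_of indep0 sub0set cards0 rankP.
have [B /and3P[iB sBj /eqP cB] injB] := IH (ltnW lej).
have [W /and3P[iW sWj /eqP cW]] := basis_exists M (P j.+1).
rewrite rankP ?(ltnW lej) // in cB; rewrite rankP // in cW.
have ltBW : #|B| < #|W| by rewrite cB cW.
have [x /setDP[xW xB] ixB] := indep_aug iB iW ltBW.
have colx : col x = j.+1.
  move: (subsetP sWj x xW); rewrite in_cprefix leq_eqVlt => /orP[/eqP //|ltx].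
  have sxBj : x |: B \subset P j.
    by rewrite subUset sub1set in_cprefix -ltnS ltx sBj.
  have := indep_card_le_rank ixB sxBj.
  by rewrite cardsU1 xB cB rankP ?ltnn // ltnW.
exists (x |: B).
  rewrite /basis_of ixB cardsU1 xB cB rankP // subUset sub1set in_cprefix colx.
  by rewrite leqnn (subset_trans sBj (cprefixS _ (leqnSn j))) add1n eqxx.
apply: inj_setU1 => // y yB; rewrite colx.
by move: (subsetP sBj y yB); rewrite in_cprefix neq_ltn ltnS => ->.
Qed.

Lemma rainbow_layered : rainbow_circuit_free M col ->
  (forall i, 1 <= i <= r -> rank M (P i) = i) -> layered.
Proof.
move=> rcf rankP1.
have rankP i : i <= r -> rank M (P i) = i.
  by case: i => [|i] ir; [exact: rank_cprefix0 | exact: rankP1].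
split=> // e; have /andP[e1 er] := col_range e.
have [B /and3P[_ sBe /eqP cB] injB] :=
  rainbow_basis_cprefix rankP (leq_trans (leq_pred _) er).
have neqB : {in B, forall y, col y != col e}.
  move=> y /(subsetP sBe); rewrite in_cprefix neq_ltn => ley.
  by rewrite (leq_ltn_trans ley) // prednK.
have eB : e \notin B by apply/negP => /neqB; rewrite eqxx.
have ieB := rainbow_indep rcf (inj_setU1 injB neqB).
apply: leq_trans (indep_card_le_rank ieB (setUS _ sBe)).
by rewrite cardsU1 eB cB.
Qed.

End Layered.

Theorem lemma13 (T : finType) (M : matroid T) (r : nat) (col : T -> nat) :
  loopless M ->
  rank M [set: T] = r ->
  (forall x, 1 <= col x <= r) ->
  let S := cclass col in
  let P := cprefix col in
  let cond_i := forall i, 1 <= i <= r -> cut_of M (P i) (S i) in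
  let cond_ii := rainbow_circuit_free M col /\
                 (forall i, 1 <= i <= r -> rank M (P i) = i) in
  let cond_iii := forall i, 1 <= i <= r -> S i != set0 /\ is_flat M (P i) in
  (cond_i <-> cond_ii) /\ (cond_ii <-> cond_iii).
Proof.
move=> loopM rankT col_range S P cond_i cond_ii cond_iii.
have layered_ii : layered M r col -> cond_ii.
  case=> rankP unsp; split; first exact: unspanned_rainbow_circuit_free unsp.
  by move=> i /andP[_ /rankP].
have ii_layered : cond_ii -> layered M r col by case; apply: rainbow_layered.
split; split.
- by move/(cut_layered col_range)/layered_ii.
- by move/ii_layered/layered_cut.
- by move/ii_layered/layered_flat.
- by move/(flat_layered col_range loopM rankT)/layered_ii.
Qed.
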